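(* Let $\mathcal{L}=(\mathrm{Fm},\vdash)$ be a selfextensional logic, $N\subseteq\mathrm{Fm}\times\mathrm{Fm}$ a normative system and $P\subseteq P_N$. Then $S^1(P,N)$ is closed under $(\top)$, (SI), (WO), $(\mathrm{AND})^{\downarrow}$; $S^2(P,N)$ is closed under $(\top)$, (SI), (WO), $(\mathrm{AND})^{\downarrow}$, $(\mathrm{OR})^{\downarrow}$; and $S^3(P,N)$ is closed under $(\top)$, (SI), (WO), $(\mathrm{AND})^{\downarrow}$, $(\mathrm{CT})^{\downarrow}$.
   Context: $Cn(\Gamma)=\{\psi\mid\Gamma\vdash\psi\}$, $Cn(\varphi,\psi)=Cn(\{\varphi,\psi\})$. Standing convention: the logic has terms $\wedge$ with $Cn(\varphi\wedge\psi)=Cn(\{\varphi,\psi\})$, $\vee$ with $Cn(\varphi\vee\psi)=Cn(\varphi)\cap Cn(\psi)$ (where rules use it), and $\top$ with $\top\in Cn(\varphi)$ for all $\varphi$. Rules on $R\subseteq\mathrm{Fm}\times\mathrm{Fm}$: $(\top)$: $(\top,\top)\in R$; (SI): $(\alpha,\varphi)\in R,\beta\vdash\alpha\Rightarrow(\beta,\varphi)\in R$; (WO): $(\alpha,\varphi)\in R,\varphi\vdash\psi\Rightarrow(\alpha,\psi)\in R$; (AND): $(\alpha,\varphi),(\alpha,\psi)\in R\Rightarrow(\alpha,\varphi\wedge\psi)\in R$; (OR): $(\alpha,\varphi),(\beta,\varphi)\in R\Rightarrow(\alpha\vee\beta,\varphi)\in R$; (CT): $(\alpha,\varphi),(\alpha\wedge\varphi,\psi)\in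 R\Rightarrow(\alpha,\psi)\in R$; $(\mathrm{AND})^{\downarrow}$: $(\alpha,\varphi)\in N,(\alpha,\psi)\in R\Rightarrow(\alpha,\varphi\wedge\psi)\in R$; $(\mathrm{OR})^{\downarrow}$: $(\alpha,\varphi)\in N,(\beta,\varphi)\in R\Rightarrow(\alpha\vee\beta,\varphi)\in R$; $(\mathrm{CT})^{\downarrow}$: $(\alpha,\varphi)\in N,(\alpha\wedge\varphi,\psi)\in R\Rightarrow(\alpha,\varphi\wedge\psi)\in R$. $N^i_{(\alpha,\varphi)}$ (resp. $N^i$) is the smallest extension of $N\cup\{(\alpha,\varphi)\}$ (resp. $N$) closed under the rule set $i=1$: $(\top)$,(SI),(WO),(AND); $i=2$: these plus (OR); $i=3$: $(\top)$,(SI),(WO),(AND),(CT). $S^i(P,N)=\bigcup\{N^i_{(\alpha,\varphi)}\mid(\alpha,\varphi)\in P\}$ if $P\neq\varnothing$ and $N^i$ otherwise. $P_N=\{(\alpha,\varphi)\mid\forall\psi((\alpha,\psi)\in N\Rightarrow Cn(\varphi,\psi)\neq\mathrm{Fm})\}$. *)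

From Stdlib Require Import Fin.

Set Implicit Arguments.

Record signature := { op : Type; arity : op -> nat }.

Inductive Fm (S : signature) : Type :=
| Var : nat -> Fm S
| App : forall f : op S, (Fin.t (arity S f) -> Fm S) -> Fm S.

Arguments Var {S} _.
Arguments App {S} _ _.

Fixpoint subst {S : signature} (s : nat -> Fm S) (t : Fm S) : Fm S :=
  match t with
  | Var v => s v
  | App f a => App f (fun i => subst s (a i))
  end.

Definition fset (S : signature) := Fm S -> Prop.
Definition sing {S} (x : Fm S) : fset S := fun y => y = x.
Definition pair {S} (x z : Fm S) : fset S := fun y => y = x \/ y = z.

Record logic (S : signature) := {
  cons : fset S -> Fm S -> Prop;
  cons_refl : forall (G : fset S) phi, G phi -> cons G phi;
  cons_mono : forall (G D : fset S) phi,
      (forall x, G x -> D x) -> cons G phi -> cons D phi;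
  cons_cut : forall (G D : fset S) phi,
      (forall psi, D psi -> cons G psi) -> cons D phi -> cons G phi;
  cons_struct : forall (G : fset S) phi (s : nat -> Fm S),
      cons G phi -> cons (fun x => exists y, G y /\ x = subst s y) (subst s phi)
}.

Definition Cn {S} (L : logic S) (G : fset S) : fset S := fun psi => cons L G psi.

Definition interder {S} (L : logic S) (phi psi : Fm S) : Prop :=
  cons L (sing phi) psi /\ cons L (sing psi) phi.

Definition selfextensional {S} (L : logic S) : Prop :=
  forall (f : op S) (a b : Fin.t (arity S f) -> Fm S),
    (forall i, interder L (a i) (b i)) -> interder L (App f a) (App f b).

Definition bin_term {S} (t : Fm S) (phi psi : Fm S) : Fm S :=
  subst (fun v => match v with 0 => phi | 1 => psi | _ => Var v end) t.

Definition is_conj {S} (L : logic S) (andt : Fm S) : Prop :=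
  forall phi psi chi,
    Cn L (sing (bin_term andt phi psi)) chi <-> Cn L (pair phi psi) chi.
Definition is_disj {S} (L : logic S) (ort : Fm S) : Prop :=
  forall phi psi chi,
    Cn L (sing (bin_term ort phi psi)) chi <->
    (Cn L (sing phi) chi /\ Cn L (sing psi) chi).
Definition is_top {S} (L : logic S) (top : Fm S) : Prop :=
  forall phi, Cn L (sing phi) top.

Definition rel (S : signature) := Fm S -> Fm S -> Prop.

Section Rules.
Context {S : signature} (L : logic S) (andt ort top : Fm S).
Local Notation "a ∧ b" := (bin_term andt a b) (at level 40, left associativity).
Local Notation "a ∨ b" := (bin_term ort a b) (at level 50, left associativity).

Definition r_top (R : rel S) : Prop := R top top.
Definition r_SI (R : rel S) : Prop :=
  forall a phi b, R a phi -> cons L (sing b) a -> R b phi.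
Definition r_WO (R : rel S) : Prop :=
  forall a phi psi, R a phi -> cons L (sing phi) psi -> R a psi.
Definition r_AND (R : rel S) : Prop :=
  forall a phi psi, R a phi -> R a psi -> R a (phi ∧ psi).
Definition r_OR (R : rel S) : Prop :=
  forall a b phi, R a phi -> R b phi -> R (a ∨ b) phi.
Definition r_CT (R : rel S) : Prop :=
  forall a phi psi, R a phi -> R (a ∧ phi) psi -> R a psi.
Definition r_ANDd (N R : rel S) : Prop :=
  forall a phi psi, N a phi -> R a psi -> R a (phi ∧ psi).
Definition r_ORd (N R : rel S) : Prop :=
  forall a b phi, N a phi -> R b phi -> R (a ∨ b) phi.
Definition r_CTd (N R : rel S) : Prop :=
  forall a phi psi, N a phi -> R (a ∧ phi) psi -> R a (phi ∧ psi).

Definition rules (i : nat) (R : rel S) : Prop :=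
  match i with
  | 1 => r_top R /\ r_SI R /\ r_WO R /\ r_AND R
  | 2 => r_top R /\ r_SI R /\ r_WO R /\ r_AND R /\ r_OR R
  | _ => r_top R /\ r_SI R /\ r_WO R /\ r_AND R /\ r_CT R
  end.

Definition closure (i : nat) (B : rel S) : rel S :=
  fun a phi => forall R : rel S, (forall x y, B x y -> R x y) -> rules i R -> R a phi.

Definition Ni (i : nat) (N : rel S) : rel S := closure i N.
Definition Ni_at (i : nat) (N : rel S) (al ph : Fm S) : rel S :=
  closure i (fun x y => N x y \/ (x = al /\ y = ph)).

Definition Si (i : nat) (P N : rel S) : rel S :=
  fun a phi =>
    (exists al ph, P al ph /\ Ni_at i N al ph a phi) \/
    ((forall al ph, ~ P al ph) /\ Ni i N a phi).
End Rules.

Definition P_N {S} (L : logic S) (N : rel S) : rel S :=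
  fun al phi => forall psi, N al psi -> Cn L (pair phi psi) <> (fun _ => True).

From Stdlib Require Import Classical.

(* S^i(P,N) is a union of pieces N^i_{(α,φ)} (or the single piece N^i when P
   is empty), each of which contains N and is closed under rule set i.  The
   rules (SI), (WO) and the three down-rules have exactly one premise in the
   relation itself, so they hold in the union as soon as they hold in every
   piece; inside a piece the N-premise of a down-rule is available as well,
   and the down-rule is an instance of (AND), (OR) or (AND) after (CT). *)

Section Closure.
Context {S : signature} (L : logic S) (andt ort top : Fm S).

Definition subrel (R R' : rel S) : Prop := forall x y, R x y -> R' x y.

Local Notation closure := (closure L andt ort top).
Local Notation rules := (rules L andt ort top).

Lemma rules_core {i R} : rules i R ->
  r_top top R /\ r_SI L R /\ r_WO L R /\ r_AND andt R.
Proof. destruct i as [|[|[|i]]]; simpl; tauto. Qed.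

Lemma closure_incl i B : subrel B (closure i B).
Proof. intros x y HB R HBR _; auto. Qed.

Lemma closure_top i B : r_top top (closure i B).
Proof. intros R _ HR; apply (rules_core HR). Qed.

Lemma closure_SI i B : r_SI L (closure i B).
Proof.
  intros a phi b Hc Hb R HBR HR.
  apply (proj1 (proj2 (rules_core HR))) with a; [apply Hc |]; assumption.
Qed.

Lemma closure_WO i B : r_WO L (closure i B).
Proof.
  intros a phi psi Hc Hphi R HBR HR.
  apply (proj1 (proj2 (proj2 (rules_core HR)))) with phi; [apply Hc |]; assumption.
Qed.

Lemma closure_AND i B : r_AND andt (closure i B).
Proof.
  intros a phi psi H1 H2 R HBR HR.
  apply (proj2 (proj2 (proj2 (rules_core HR)))); [apply H1 | apply H2]; assumption.
Qed.

Lemma closure_OR B : r_OR ort (closure 2 B).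
Proof.
  intros a b phi Ha Hb R HBR HR.
  pose proof HR as (_ & _ & _ & _ & HOR); apply HOR; [apply Ha | apply Hb]; assumption.
Qed.

Lemma closure_CT B : r_CT andt (closure 3 B).
Proof.
  intros a phi psi H1 H2 R HBR HR.
  pose proof HR as (_ & _ & _ & _ & HCT); apply HCT with phi; [apply H1 | apply H2]; assumption.
Qed.

Lemma ANDd_of_AND N R : subrel N R -> r_AND andt R -> r_ANDd andt N R.
Proof. intros HNR HAND a phi psi Hn Hr; apply HAND; auto. Qed.

Lemma ORd_of_OR N R : subrel N R -> r_OR ort R -> r_ORd ort N R.
Proof. intros HNR HOR a b phi Hn Hr; apply HOR; auto. Qed.

Lemma CTd_of_AND_CT N R :
  subrel N R -> r_AND andt R -> r_CT andt R -> r_CTd andt N R.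
Proof.
  intros HNR HAND HCT a phi psi Hn Hr.
  apply HAND; [auto | apply HCT with phi; auto].
Qed.

Local Notation Si := (Si L andt ort top).

Lemma Si_piece {i P N a phi} : Si i P N a phi ->
  exists B, subrel N B /\ closure i B a phi /\ subrel (closure i B) (Si i P N).
Proof.
  intros [(al & ph & HP & Hc) | (HP & Hc)].
  - exists (fun x y => N x y \/ (x = al /\ y = ph)).
    split; [intros x y; auto | split; [exact Hc |]].
    intros x y H; left; eauto.
  - exists N; split; [intros x y; auto | split; [exact Hc |]].
    intros x y H; right; auto.
Qed.

Lemma Si_top i P N : r_top top (Si i P N).
Proof.
  destruct (classic (exists al ph, P al ph)) as [(al & ph & HP) | HP].
  - left; exists al, ph; split; [exact HP | apply closure_top].
  - right; split; [intros al ph Hp; apply HP; eauto | apply closure_top].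
Qed.

Lemma Si_SI i P N : r_SI L (Si i P N).
Proof.
  intros a phi b Hs Hb; destruct (Si_piece Hs) as (B & _ & Hc & HBS).
  apply HBS, closure_SI with a; auto.
Qed.

Lemma Si_WO i P N : r_WO L (Si i P N).
Proof.
  intros a phi psi Hs Hphi; destruct (Si_piece Hs) as (B & _ & Hc & HBS).
  apply HBS, closure_WO with phi; auto.
Qed.

Lemma closure_subrel i B N : subrel N B -> subrel N (closure i B).
Proof. intros HNB x y Hxy; apply closure_incl, HNB, Hxy. Qed.

Lemma Si_ANDd i P N : r_ANDd andt N (Si i P N).
Proof.
  intros a phi psi Hn Hs; destruct (Si_piece Hs) as (B & HNB & Hc & HBS).
  assert (HANDd : r_ANDd andt N (closure i B))
    by (apply ANDd_of_AND; [apply closure_subrel, HNB | apply closure_AND]).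
  exact (HBS _ _ (HANDd _ _ _ Hn Hc)).
Qed.

Lemma Si_ORd P N : r_ORd ort N (Si 2 P N).
Proof.
  intros a b phi Hn Hs; destruct (Si_piece Hs) as (B & HNB & Hc & HBS).
  assert (HORd : r_ORd ort N (closure 2 B))
    by (apply ORd_of_OR; [apply closure_subrel, HNB | apply closure_OR]).
  exact (HBS _ _ (HORd _ _ _ Hn Hc)).
Qed.

Lemma Si_CTd P N : r_CTd andt N (Si 3 P N).
Proof.
  intros a phi psi Hn Hs; destruct (Si_piece Hs) as (B & HNB & Hc & HBS).
  assert (HCTd : r_CTd andt N (closure 3 B))
    by (apply CTd_of_AND_CT;
        [apply closure_subrel, HNB | apply closure_AND | apply closure_CT]).
  exact (HBS _ _ (HCTd _ _ _ Hn Hc)).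
Qed.

End Closure.

Theorem corollary4p14 (S : signature) (L : logic S) (andt top : Fm S)
  (Hself : selfextensional L) (Hand : is_conj L andt) (Htop : is_top L top)
  (N P : rel S) (HP : forall al phi, P al phi -> P_N L N al phi) :
  (let R := Si L andt andt top 1 P N in
     r_top top R /\ r_SI L R /\ r_WO L R /\ r_ANDd andt N R) /\
  (forall ort : Fm S, is_disj L ort ->
     let R := Si L andt ort top 2 P N in
     r_top top R /\ r_SI L R /\ r_WO L R /\ r_ANDd andt N R /\ r_ORd ort N R) /\
  (let R := Si L andt andt top 3 P N in
     r_top top R /\ r_SI L R /\ r_WO L R /\ r_ANDd andt N R /\ r_CTd andt N R).
Proof.
  split; [| split; [intros ort _ |]]; cbv zeta;
    repeat split; auto using Si_top, Si_SI, Si_WO, Si_ANDd, Si_ORd, Si_CTd.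
Qed.
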